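(* Let $\mathcal{T}$ be an $l$-eligible microdata table and run the three-phase algorithm described in the context (arbitrary tie-breaking). Phase Three consists of at most $h(\ddot{R})$ rounds, where $\ddot{R}$ is the residue set at the end of Phase Two.
   Context: A microdata table $\mathcal{T}$ is a multiset of $n$ tuples with values on $d$ quasi-identifier (QI) attributes and one sensitive attribute (SA). For a multiset $Q$ and SA value $v$, $h(Q,v)$ is the number of tuples in $Q$ with SA value $v$, $h(Q)=\max_v h(Q,v)$, pillars of $Q$ are the $v$ with $h(Q,v)=h(Q)$; $Q$ is $l$-eligible if $|Q|\ge l\cdot h(Q)$. Let $Q_1,\dots,Q_s$ be the maximal classes of tuples of $\mathcal{T}$ with identical values on all QI attributes; the algorithm only moves tuples from these groups into a residue set $R$ (initially empty), and terminates as soon as $R$ becomes $l$-eligible. Terminology (w.r.t. current state): a group $Q$ is thin if $|Q|=l\cdot h(Q)$, fat if $|Q|\ge l\cdot h(Q)+1$; conflicting if some pillar of $Q$ is a pillar of $R$ (its conflicting pillars, set $C(Q)$); dead if thin and conflicting, alive otherwise; an SA value $v$ is alive if some alive group $Q$ has $h(Q,v)>0$. Phase One: for each $i$, while $Q_i$ is not $l$-eligible, move a tuple of a pillar of $Q_i$ to $R$. Phase Two: repeat: if no SA value is alive, go to Phase Three; else pick an alive SA value $v$ minimizing $h(R,v)$ and an alive group $Q$ with $h(Q,v)>0$; if $Q$ is fat move one tuple with SA value $v$ to $R$, if thin move one tuple of each pillar of $Q$ to $R$. Phase Three proceeds in rounds. Step 1: let $P$ be the set of pillars of $R$ and $S=\emptyset$;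 while $P\ne\emptyset$, pick a group $Q$ minimizing $|C(Q)\cap P|$, add it to $S$, and set $P\leftarrow P\cap C(Q)$; then for each $Q\in S$ move one tuple of each pillar of $Q$ to $R$. Step 2: for each group $Q$ that is now alive, repeat until $Q$ is dead: if $Q$ is fat, move to $R$ a tuple of $Q$ whose SA value is not a pillar of $R$; if $Q$ is thin and non-conflicting, move one tuple of each pillar of $Q$ to $R$. All ties are broken arbitrarily. *)

(* Model of the three-phase residue algorithm as a
   nondeterministic small-step transition system ("arbitrary tie-breaking"
   = every choice the algorithm is allowed to make is a possible step). *)
From mathcomp Require Import all_boot.
Set Implicit Arguments. Unset Strict Implicit. Unset Printing Implicit Defensive.

(* SA values are natural numbers; a multiset of tuples is represented, as far
   as SA values are concerned, by the sequence of their SA values. *)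

Definition hv (Q : seq nat) (v : nat) : nat := count_mem v Q.
Definition hmax (Q : seq nat) : nat := \max_(v <- Q) hv Q v.
Definition l_eligible (l : nat) (Q : seq nat) : bool := l * hmax Q <= size Q.
(* v is a pillar of Q : h(Q,v) = h(Q)  (for nonempty Q this forces v \in Q;
   we require v \in Q so that the empty multiset has no pillars) *)
Definition pillar (Q : seq nat) (v : nat) : bool := (v \in Q) && (hv Q v == hmax Q).
Definition thin (l : nat) (Q : seq nat) : bool := size Q == l * hmax Q.
Definition fat (l : nat) (Q : seq nat) : bool := l * hmax Q + 1 <= size Q.
Definition conflicting (R Q : seq nat) : bool :=
  has (fun v => pillar Q v && pillar R v) Q.
Definition conf_pillars (R Q : seq nat) : seq nat :=
  undup [seq v <- Q | pillar Q v && pillar R v].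
Definition dead (l : nat) (R Q : seq nat) : bool := thin l Q && conflicting R Q.
(* only nonempty groups are groups *)
Definition alive (l : nat) (R Q : seq nat) : bool := (Q != [::]) && ~~ dead l R Q.
Definition alive_val (l : nat) (R : seq nat) (gs : seq (seq nat)) (v : nat) : bool :=
  has (fun Q => alive l R Q && (v \in Q)) gs.

Definition move_gs (gs : seq (seq nat)) (i v : nat) : seq (seq nat) :=
  set_nth [::] gs i (rem v (nth [::] gs i)).

Inductive ctrl : Type :=
| Ph1 of nat                       (* Phase One, processing group i *)
| Ph2                              (* Phase Two, head of the loop *)
| Ph3                              (* Phase Three, start of a new round *)
| Sel of seq nat & seq nat         (* Step 1 selection loop, current P and S *)
| Step2Init                        (* Step 2, compute the groups now alive *)
| Step2 of seq nat                 (* Step 2, groups still to be processed *)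
| Moves of seq (nat * nat) & ctrl  (* pending single-tuple moves (group, value),
                                      then continue *)
| Halt.                            (* R became l-eligible *)

Record config := Config {
  groups : seq (seq nat);   (* current contents of Q_1..Q_s *)
  resid  : seq nat;         (* current residue set R *)
  ctl    : ctrl;
  rounds : nat;             (* number of Phase Three rounds started so far *)
  Rdd    : seq nat          (* residue set at the end of Phase Two *)
}.

Section Step.
Variable l : nat.
Local Notation G gs i := (nth [::] gs i).

Inductive step : config -> config -> Prop :=
| p1_next gs R i n Rd : i < size gs -> l_eligible l (G gs i) ->
    step (Config gs R (Ph1 i) n Rd) (Config gs R (Ph1 i.+1) n Rd)
| p1_move gs R i v n Rd : i < size gs -> ~~ l_eligible l (G gs i) ->
    pillar (G gs i) v ->
    step (Config gs R (Ph1 i) n Rd) (Config gs R (Moves [:: (i, v)] (Ph1 i)) n Rd)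
| p1_done gs R i n Rd : size gs <= i ->
    step (Config gs R (Ph1 i) n Rd) (Config gs R Ph2 n Rd)
| mv_nil gs R k n Rd :
    step (Config gs R (Moves [::] k) n Rd) (Config gs R k n Rd)
| mv_halt gs R i v mv k n Rd : l_eligible l (v :: R) ->
    step (Config gs R (Moves ((i, v) :: mv) k) n Rd)
         (Config (move_gs gs i v) (v :: R) Halt n Rd)
| mv_cont gs R i v mv k n Rd : ~~ l_eligible l (v :: R) ->
    step (Config gs R (Moves ((i, v) :: mv) k) n Rd)
         (Config (move_gs gs i v) (v :: R) (Moves mv k) n Rd)
| p2_done gs R n Rd : (forall v, ~~ alive_val l R gs v) ->
    step (Config gs R Ph2 n Rd) (Config gs R Ph3 n R)
| p2_fat gs R v i n Rd : alive_val l R gs v ->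
    (forall w, alive_val l R gs w -> hv R v <= hv R w) ->
    i < size gs -> alive l R (G gs i) -> v \in G gs i -> fat l (G gs i) ->
    step (Config gs R Ph2 n Rd) (Config gs R (Moves [:: (i, v)] Ph2) n Rd)
| p2_thin gs R v i vs n Rd : alive_val l R gs v ->
    (forall w, alive_val l R gs w -> hv R v <= hv R w) ->
    i < size gs -> alive l R (G gs i) -> v \in G gs i -> thin l (G gs i) ->
    uniq vs -> (forall w, (w \in vs) = pillar (G gs i) w) ->
    step (Config gs R Ph2 n Rd)
         (Config gs R (Moves [seq (i, w) | w <- vs] Ph2) n Rd)
| p3_round gs R n Rd :
    step (Config gs R Ph3 n Rd)
         (Config gs R (Sel (undup [seq v <- R | pillar R v]) [::]) n.+1 Rd)
| sel_pick gs R P S i n Rd : P != [::] -> i < size gs -> G gs i != [::] ->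
    (forall j, j < size gs -> G gs j != [::] ->
       size [seq v <- P | v \in conf_pillars R (G gs i)]
       <= size [seq v <- P | v \in conf_pillars R (G gs j)]) ->
    step (Config gs R (Sel P S) n Rd)
         (Config gs R (Sel [seq v <- P | v \in conf_pillars R (G gs i)]
                           (undup (i :: S))) n Rd)
| sel_move gs R S mv n Rd : uniq mv ->
    (forall i v, ((i, v) \in mv) = (i \in S) && pillar (G gs i) v) ->
    step (Config gs R (Sel [::] S) n Rd) (Config gs R (Moves mv Step2Init) n Rd)
| s2_init gs R ord n Rd : uniq ord ->
    (forall i, (i \in ord) = (i < size gs) && alive l R (G gs i)) ->
    step (Config gs R Step2Init n Rd) (Config gs R (Step2 ord) n Rd)
| s2_skip gs R i ord n Rd : ~~ alive l R (G gs i) ->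
    step (Config gs R (Step2 (i :: ord)) n Rd) (Config gs R (Step2 ord) n Rd)
| s2_fat gs R i v ord n Rd : alive l R (G gs i) -> fat l (G gs i) ->
    v \in G gs i -> ~~ pillar R v ->
    step (Config gs R (Step2 (i :: ord)) n Rd)
         (Config gs R (Moves [:: (i, v)] (Step2 (i :: ord))) n Rd)
| s2_thin gs R i vs ord n Rd : alive l R (G gs i) -> thin l (G gs i) ->
    ~~ conflicting R (G gs i) ->
    uniq vs -> (forall w, (w \in vs) = pillar (G gs i) w) ->
    step (Config gs R (Step2 (i :: ord)) n Rd)
         (Config gs R (Moves [seq (i, w) | w <- vs] (Step2 (i :: ord))) n Rd)
| s2_done gs R n Rd :
    step (Config gs R (Step2 [::]) n Rd) (Config gs R Ph3 n Rd).

Inductive reach (c0 : config) : config -> Prop :=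
| reach0 : reach c0 c0
| reachS c c' : reach c0 c -> step c c' -> reach c0 c'.
End Step.

(* the tuples of the table T with QI-vector q, as a multiset of SA values *)
Definition qi_class (d : nat) (T : seq (d.-tuple nat * nat)) (q : d.-tuple nat) : seq nat :=
  [seq t.2 | t <- T & t.1 == q].

Definition init_config (gs : seq (seq nat)) : config := Config gs [::] (Ph1 0) 0 [::].

(* Measure a state by its weight [h(R) + sum_Q h(Q)] and its total number of
   tuples.  A round of Phase Three moves one tuple of each pillar of every
   selected group: each selected group loses one unit of [h], while [h(R)]
   grows by less than the number of selected groups, because the selection
   leaves every pillar of [R] missed by some selected group.  So every round
   lowers the weight, Step 2 never raises it, and the total never decreases.
   At the start of a round all groups are thin and [R] is not eligible, so
   [l * weight > total]; comparing with the end of Phase Two, where the residue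
   is [Rd] and [l * weight = l * h(Rd) + total - |Rd|], bounds the number of
   rounds by [h(Rd)]. *)

From mathcomp Require Import all_boot zify.
Set Implicit Arguments. Unset Strict Implicit. Unset Printing Implicit Defensive.

Local Notation G gs j := (nth [::] gs j).

Lemma hv_le_hmax Q v : hv Q v <= hmax Q.
Proof.
have [vQ|/count_memPn] := boolP (v \in Q); first exact: leq_bigmax_seq.
by rewrite /hv => ->.
Qed.

Lemma hmax_le Q k : (forall v, hv Q v <= k) -> hmax Q <= k.
Proof. by move=> le_k; apply/bigmax_leqP_seq => v _ _. Qed.

Lemma hmax_sub Q Q' : (forall v, hv Q' v <= hv Q v) -> hmax Q' <= hmax Q.
Proof. by move=> le_hv; apply: hmax_le => v; apply: leq_trans (le_hv v) (hv_le_hmax _ _). Qed.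

Lemma hmax_nil : hmax [::] = 0.
Proof. by rewrite /hmax big_nil. Qed.

Lemma hmax_gt0 Q : Q != [::] -> 0 < hmax Q.
Proof. by case: Q => // v Q _; apply: leq_trans (hv_le_hmax _ v); rewrite /hv /= eqxx. Qed.

Lemma pillar_mem Q v : pillar Q v -> v \in Q.
Proof. by case/andP. Qed.

Lemma pillar_hv Q v : pillar Q v -> hv Q v = hmax Q.
Proof. by case/andP=> _ /eqP. Qed.

Lemma hv_lt_hmax Q v : Q != [::] -> ~~ pillar Q v -> hv Q v < hmax Q.
Proof.
move=> nQ; rewrite /pillar negb_and => /orP[/count_memPn|].
  by rewrite /hv => ->; apply: hmax_gt0.
by rewrite ltn_neqAle hv_le_hmax andbT.
Qed.

Lemma hmax_drop_pillars Q Q' : Q != [::] ->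
  (forall v, hv Q' v <= hv Q v - pillar Q v) -> hmax Q' < hmax Q.
Proof.
move=> nQ le_hv; rewrite -(prednK (hmax_gt0 nQ)) ltnS; apply: hmax_le => v.
apply: leq_trans (le_hv v) _; have [/pillar_hv ->|npil] := boolP (pillar Q v).
  by rewrite subn1.
by rewrite subn0 -ltnS prednK ?hmax_gt0 ?hv_lt_hmax.
Qed.

Lemma l_eligible_nil l : l_eligible l [::].
Proof. by rewrite /l_eligible hmax_nil muln0. Qed.

Lemma thin_nil l : thin l [::].
Proof. by rewrite /thin hmax_nil muln0. Qed.

Lemma not_eligible_neq_nil l R : ~~ l_eligible l R -> R != [::].
Proof. by apply: contra => /eqP ->; apply: l_eligible_nil. Qed.

Lemma pillar_neq_nil Q v : pillar Q v -> Q != [::].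
Proof. by case: Q. Qed.

Lemma hv_add_nonpillars R vs x : R != [::] -> uniq vs ->
  (forall w, w \in vs -> ~~ pillar R w) -> hv R x + count_mem x vs <= hmax R.
Proof.
move=> nR vs_uniq npil; rewrite (count_uniq_mem _ vs_uniq).
have [/npil/(hv_lt_hmax nR)|_] := boolP (x \in vs); first by rewrite addn1.
by rewrite addn0 hv_le_hmax.
Qed.

Lemma sum_andb_lt n (a b : pred 'I_n) i : a i -> ~~ b i ->
  \sum_(j < n) (a j && b j : nat) < \sum_(j < n) (a j : nat).
Proof.
move=> ai nbi; rewrite (bigD1 i) //= [X in _ < X](bigD1 i) //= ai (negbTE nbi).
by rewrite add0n add1n ltnS; apply: leq_sum => j _; case: (a j); rewrite ?leq_b1.
Qed.

Lemma sum_andb_le n (a b : pred 'I_n) :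
  \sum_(j < n) (a j && b j : nat) <= \sum_(j < n) (a j : nat).
Proof. by apply: leq_sum => j _; case: (a j); rewrite ?leq_b1. Qed.

(* The outcome of a [Moves] control point that runs to completion. *)

Fixpoint apply_moves (gs : seq (seq nat)) (R : seq nat) (mv : seq (nat * nat)) :
    seq (seq nat) * seq nat :=
  if mv is (i, v) :: mv' then apply_moves (move_gs gs i v) (v :: R) mv' else (gs, R).

Lemma size_move_gs gs i v : i < size gs -> size (move_gs gs i v) = size gs.
Proof. by move=> lt_i; rewrite /move_gs size_set_nth; apply/maxn_idPr. Qed.

Lemma nth_move_gs gs i v j :
  G (move_gs gs i v) j = if j == i then rem v (G gs i) else G gs j.
Proof. by rewrite /move_gs nth_set_nth /=; case: eqP => // ->. Qed.

Section ApplyMoves.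
Variables (gs : seq (seq nat)) (R : seq nat) (mv : seq (nat * nat)).
Let gs' := (apply_moves gs R mv).1.
Let R' := (apply_moves gs R mv).2.

Lemma size_apply_moves :
  (forall p, p \in mv -> p.1 < size gs) -> size gs' = size gs.
Proof.
rewrite {}/gs'; elim: mv gs R => [|[i v] mv' IH] gs0 R0 //= mv_lt.
have lt_i : i < size gs0 by apply: (mv_lt (i, v)); rewrite mem_head.
by rewrite IH ?size_move_gs // => p p_mv; rewrite mv_lt // inE p_mv orbT.
Qed.

Lemma size_apply_moves_resid : size R' = size R + size mv.
Proof.
by rewrite {}/R'; elim: mv gs R => [|[i v] mv' IH] gs0 R0 /=; rewrite ?addn0 // IH addSnnS.
Qed.

Lemma hv_apply_moves_resid x : hv R' x = hv R x + count (fun p => p.2 == x) mv.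
Proof.
rewrite {}/R' /hv; elim: mv gs R => [|[i v] mv' IH] gs0 R0 /=; first by rewrite addn0.
by rewrite IH /= addnA [_ + (v == x)]addnC eq_sym.
Qed.

Lemma hv_apply_moves_group j x :
  hv (G gs' j) x = hv (G gs j) x - count (pred1 (j, x)) mv.
Proof.
rewrite {}/gs' /hv; elim: mv gs R => [|[i v] mv' IH] gs0 R0 /=; first by rewrite subn0.
rewrite IH nth_move_gs subnDA /= xpair_eqE eq_sym.
by case: (eqVneq j i) => [->|_] /=; rewrite ?count_mem_rem ?subn0.
Qed.

Lemma nth_apply_moves_other j : (forall p, p \in mv -> p.1 != j) -> G gs' j = G gs j.
Proof.
rewrite {}/gs'; elim: mv gs R => [|[i v] mv' IH] gs0 R0 //= mv_j.
rewrite IH => [|p p_mv]; last by rewrite mv_j // inE p_mv orbT.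
by rewrite nth_move_gs eq_sym (negbTE (mv_j (i, v) (mem_head _ _))).
Qed.

End ApplyMoves.

Lemma count_moves_value n (mv : seq (nat * nat)) x :
  uniq mv -> (forall p, p \in mv -> p.1 < n) ->
  count (fun p => p.2 == x) mv = \sum_(j < n) ((nat_of_ord j, x) \in mv : nat).
Proof.
move=> mv_uniq mv_lt.
under eq_bigr do rewrite -(count_uniq_mem _ mv_uniq) -sum1_count big_mkcond.
rewrite exchange_big /= -sum1_count big_mkcond /=.
apply: eq_big_seq => -[i v] /mv_lt /= lt_in.
have [->|nvx] := eqVneq v x; last first.
  by rewrite big1 // => j _; rewrite xpair_eqE (negbTE nvx) andbF.
rewrite (bigD1 (Ordinal lt_in)) //= xpair_eqE !eqxx big1 // => j.
by rewrite xpair_eqE eqxx andbT -val_eqE eq_sym => /negbTE ->.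
Qed.

Definition sum_hmax (gs : seq (seq nat)) : nat := \sum_(j < size gs) hmax (G gs j).
Definition sum_size (gs : seq (seq nat)) : nat := \sum_(j < size gs) size (G gs j).

Definition weight (gs : seq (seq nat)) (R : seq nat) : nat := hmax R + sum_hmax gs.
Definition total (gs : seq (seq nat)) (R : seq nat) : nat := size R + sum_size gs.

Lemma sum_size_move_gs gs i v : i < size gs -> sum_size gs <= (sum_size (move_gs gs i v)).+1.
Proof.
move=> lt_i; rewrite /sum_size size_move_gs // (bigD1 (Ordinal lt_i)) //.
rewrite [X in _ <= X.+1](bigD1 (Ordinal lt_i)) //= nth_move_gs eqxx -addSn leq_add //.
  by have [/size_rem ->|/rem_id ->] := boolP (v \in G gs i); rewrite ?leqSpred.
by apply: eq_leq; apply: eq_bigr => j; rewrite -val_eqE nth_move_gs => /negbTE ->.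
Qed.

Lemma sum_size_thin l gs : (forall j, thin l (G gs j)) -> sum_size gs = l * sum_hmax gs.
Proof. move=> thin_gs; rewrite /sum_size big_distrr; apply: eq_bigr => j _; exact/eqP/thin_gs. Qed.

(* The total only grows, since moving an absent value still adds a tuple to [R]. *)
Lemma total_apply_moves gs R mv : (forall p, p \in mv -> p.1 < size gs) ->
  total gs R <= total (apply_moves gs R mv).1 (apply_moves gs R mv).2.
Proof.
elim: mv gs R => [|[i v] mv IH] gs R //= mv_lt.
have lt_i : i < size gs by apply: (mv_lt (i, v)); rewrite mem_head.
apply: leq_trans (IH _ _ _) => [|p p_mv]; last by rewrite size_move_gs // mv_lt // inE p_mv orbT.
by rewrite /total /= addSnnS leq_add2l sum_size_move_gs.
Qed.

Lemma sum_hmax_apply_moves gs R mv : (forall p, p \in mv -> p.1 < size gs) ->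
  sum_hmax (apply_moves gs R mv).1 <= sum_hmax gs.
Proof.
move=> mv_lt; rewrite /sum_hmax size_apply_moves //; apply: leq_sum => j _.
by apply: hmax_sub => x; rewrite hv_apply_moves_group leq_subr.
Qed.

Lemma weight_apply_moves gs R mv : (forall p, p \in mv -> p.1 < size gs) ->
  (forall x, hv R x + count (fun p => p.2 == x) mv <= hmax R) ->
  weight (apply_moves gs R mv).1 (apply_moves gs R mv).2 <= weight gs R.
Proof.
move=> mv_lt le_hmax; rewrite /weight leq_add ?sum_hmax_apply_moves //.
by apply: hmax_le => x; rewrite hv_apply_moves_resid.
Qed.

Section PillarRound.
Variables (gs : seq (seq nat)) (R : seq nat) (S : seq nat) (mv : seq (nat * nat)).
Hypotheses (nR : R != [::]) (mv_uniq : uniq mv).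
Hypothesis mem_mv : forall i v, ((i, v) \in mv) = (i \in S) && pillar (G gs i) v.
Hypothesis S_groups : forall i, i \in S -> i < size gs /\ G gs i != [::].
Hypothesis S_covers : forall v, pillar R v -> exists2 i, i \in S & ~~ pillar (G gs i) v.

Let gs' := (apply_moves gs R mv).1.
Let R' := (apply_moves gs R mv).2.
Let nS := \sum_(j < size gs) (nat_of_ord j \in S : nat).

Let mv_lt p : p \in mv -> p.1 < size gs.
Proof. by case: p => i v; rewrite mem_mv => /andP[/S_groups[]]. Qed.

Lemma sum_hmax_pillar_round : sum_hmax gs' + nS <= sum_hmax gs.
Proof.
rewrite /sum_hmax size_apply_moves // -big_split /=; apply: leq_sum => j _.
have le_hv x :
    hv (G gs' j) x <= hv (G gs j) x - ((nat_of_ord j \in S) && pillar (G gs j) x).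
  by rewrite hv_apply_moves_group (count_uniq_mem _ mv_uniq) mem_mv.
have [jS|_] := boolP (nat_of_ord j \in S); last first.
  by rewrite addn0; apply: hmax_sub => x; apply: leq_trans (le_hv x) (leq_subr _ _).
rewrite addn1; apply: hmax_drop_pillars => [|x]; first by case: (S_groups jS).
by move: (le_hv x); rewrite jS.
Qed.

Lemma hmax_pillar_round : hmax R' < hmax R + nS.
Proof.
rewrite -(prednK (leq_trans (hmax_gt0 nR) (leq_addr _ _))) ltnS.
apply: hmax_le => x; rewrite hv_apply_moves_resid (count_moves_value _ mv_uniq mv_lt).
pose inS (j : 'I_(size gs)) := nat_of_ord j \in S.
pose pil_x (j : 'I_(size gs)) := pillar (G gs j) x.
rewrite (eq_bigr (fun j => inS j && pil_x j : nat)) => [|j _]; last by rewrite mem_mv.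
set m := \sum_(j < size gs) _.
have [pil|npil] := boolP (pillar R x).
  have [i iS npil_i] := S_covers pil; have [lt_i _] := S_groups iS.
  have lt_m : m < nS by apply: (sum_andb_lt (i := Ordinal lt_i)).
  by rewrite (pillar_hv pil); lia.
have le_m : m <= nS by apply: sum_andb_le.
by have := hv_lt_hmax nR npil; lia.
Qed.

Lemma weight_pillar_round : weight gs' R' < weight gs R.
Proof. by have := sum_hmax_pillar_round; have := hmax_pillar_round; rewrite /weight; lia. Qed.

End PillarRound.

Lemma not_alive_thin l R Q : ~~ alive l R Q -> thin l Q.
Proof. by rewrite negb_and negbK => /orP[/eqP ->|/negPn/andP[]//]; apply: thin_nil. Qed.

Lemma alive_size l R gs j : alive l R (G gs j) -> j < size gs.
Proof. by apply: contraTT; rewrite -leqNgt => /(nth_default [::]) ->. Qed.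

Lemma not_alive_val_groups l R gs : (forall v, ~~ alive_val l R gs v) ->
  forall j, ~~ alive l R (G gs j).
Proof.
move=> dead_vals j; apply/negP => al; case E: (G gs j) al => [|v Q] // al.
case/negP: (dead_vals v); apply/hasP; exists (G gs j); last by rewrite E al mem_head.
by rewrite mem_nth // (alive_size (l := l) (R := R)) // E.
Qed.

Section Invariant.
Variable l : nat.
Hypothesis l_gt0 : 0 < l.

(* The empty residue is [l]-eligible, so "not halted" must allow [R = [::]]. *)
Definition running (R : seq nat) : bool := (R == [::]) || ~~ l_eligible l R.

Definition early (gs : seq (seq nat)) (R : seq nat) (n : nat) : Prop :=
  [/\ n = 0, running R & R != [::] \/ exists j, G gs j != [::]].

Definition within_budget (gs : seq (seq nat)) (R : seq nat) (n : nat) (Rd : seq nat) : bool :=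
  l * (weight gs R + n) + size Rd <= l * hmax Rd + total gs R.

Definition in_round (gs : seq (seq nat)) (R : seq nat) (n : nat) (Rd : seq nat) (m : nat) :
    Prop :=
  [/\ ~~ l_eligible l R, n <= hmax Rd, 0 < n & within_budget gs R m Rd].

Fixpoint inv (k : ctrl) (gs : seq (seq nat)) (R : seq nat) (n : nat) (Rd : seq nat) : Prop :=
  match k with
  | Ph1 _ | Ph2 => early gs R n
  | Ph3 => [/\ ~~ l_eligible l R, forall j, thin l (G gs j) & within_budget gs R n Rd]
  | Sel P sel => [/\ in_round gs R n Rd n.-1,
      forall i, i \in sel -> i < size gs /\ G gs i != [::] &
      forall v, pillar R v -> v \in P \/ exists2 i, i \in sel & ~~ pillar (G gs i) v]
  | Step2Init => in_round gs R n Rd n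
  | Step2 ord => in_round gs R n Rd n /\ forall j, (j \in ord) || thin l (G gs j)
  | Moves mv k' => [/\ forall p, p \in mv -> p.1 < size gs, n <= hmax Rd, running R &
      running (apply_moves gs R mv).2 ->
      inv k' (apply_moves gs R mv).1 (apply_moves gs R mv).2 n Rd]
  | Halt => n <= hmax Rd
  end.

Definition inv_config (c : config) : Prop := inv (ctl c) (groups c) (resid c) (rounds c) (Rdd c).

Lemma round_bound gs R n Rd : inv Ph3 gs R n Rd -> n < hmax Rd.
Proof.
case=> nelig /sum_size_thin thin_gs; rewrite /within_budget /weight /total thin_gs !mulnDr.
move: nelig; rewrite /l_eligible -ltnNge => nelig budget.
suff : l * n < l * hmax Rd by rewrite ltn_mul2l l_gt0.
lia.
Qed.

Lemma not_eligible_apply_moves gs R mv : ~~ l_eligible l R ->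
  running (apply_moves gs R mv).2 -> ~~ l_eligible l (apply_moves gs R mv).2.
Proof.
move=> /not_eligible_neq_nil nR /orP[|//].
by rewrite -size_eq0 size_apply_moves_resid addn_eq0 size_eq0 (negbTE nR).
Qed.

Lemma within_budget_apply_moves gs R mv n n' Rd :
  (forall p, p \in mv -> p.1 < size gs) ->
  weight (apply_moves gs R mv).1 (apply_moves gs R mv).2 + n' <= weight gs R + n ->
  within_budget gs R n Rd ->
  within_budget (apply_moves gs R mv).1 (apply_moves gs R mv).2 n' Rd.
Proof.
move=> mv_lt le_weight; have := total_apply_moves R mv_lt.
have : l * (weight (apply_moves gs R mv).1 (apply_moves gs R mv).2 + n') <=
       l * (weight gs R + n) by rewrite leq_mul2l le_weight orbT.
by rewrite /within_budget; lia.
Qed.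

Lemma inv_early_moves gs R n Rd mv k : (forall p, p \in mv -> p.1 < size gs) ->
  (forall gs' R', early gs' R' n -> inv k gs' R' n Rd) ->
  early gs R n -> inv (Moves mv k) gs R n Rd.
Proof.
move=> mv_lt inv_k [n0 run left]; split => //; first by rewrite n0.
move=> run'; apply: inv_k; split => //; case: mv {mv_lt run'} => [//|p mv]; left.
by rewrite -size_eq0 size_apply_moves_resid addnS.
Qed.

Lemma inv_phase2_done gs R n : (forall v, ~~ alive_val l R gs v) ->
  early gs R n -> inv Ph3 gs R n R.
Proof.
move=> /not_alive_val_groups dead_gs [-> run left].
have thin_gs j : thin l (G gs j) by apply: not_alive_thin (dead_gs j).
have nR : R != [::].
  case: left => [//|[j nGj]]; move: (dead_gs j); rewrite /alive nGj negbK.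
  by case/andP=> _ /hasP[v _ /andP[_ /pillar_neq_nil]].
split => [|j|]; first by case/orP: run nR => [/eqP ->|].
- exact: thin_gs.
- by rewrite /within_budget /weight /total (sum_size_thin thin_gs) !mulnDr; lia.
Qed.

Lemma inv_sel_pick gs R P S i n Rd : i < size gs -> G gs i != [::] ->
  inv (Sel P S) gs R n Rd ->
  inv (Sel [seq v <- P | v \in conf_pillars R (G gs i)] (undup (i :: S))) gs R n Rd.
Proof.
move=> lt_i nGi [round S_groups S_covers].
have mem_S j : (j \in undup (i :: S)) = (j == i) || (j \in S) by rewrite mem_undup inE.
split => // [j|v pil]; first by rewrite mem_S => /orP[/eqP ->|/S_groups].
case: (S_covers v pil) => [vP|[j jS npil]]; last by right; exists j; rewrite ?mem_S ?jS ?orbT.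
have [conf|nconf] := boolP (v \in conf_pillars R (G gs i)); first by left; rewrite mem_filter conf.
right; exists i; first by rewrite mem_S eqxx.
apply: contra nconf => pil_i.
by rewrite mem_undup mem_filter pil_i pil pillar_mem.
Qed.

Lemma inv_sel_move gs R S mv n Rd : uniq mv ->
  (forall i v, ((i, v) \in mv) = (i \in S) && pillar (G gs i) v) ->
  inv (Sel [::] S) gs R n Rd -> inv (Moves mv Step2Init) gs R n Rd.
Proof.
move=> mv_uniq mem_mv [[nelig le_n n_gt0 budget] S_groups S_covers].
have mv_lt p : p \in mv -> p.1 < size gs.
  by case: p => i v; rewrite mem_mv => /andP[/S_groups[]].
have S_covers' v : pillar R v -> exists2 i, i \in S & ~~ pillar (G gs i) v.
  by case/S_covers.
have := weight_pillar_round (not_eligible_neq_nil nelig) mv_uniq mem_mv S_groups S_covers'.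
move=> lt_weight; split => //; first by rewrite /running nelig orbT.
move=> run'; split => //; first exact: not_eligible_apply_moves.
by apply: within_budget_apply_moves budget => //; lia.
Qed.

Lemma inv_step2_moves gs R n Rd i ord vs : alive l R (G gs i) -> uniq vs ->
  (forall w, w \in vs -> ~~ pillar R w) ->
  inv (Step2 (i :: ord)) gs R n Rd ->
  inv (Moves [seq (i, w) | w <- vs] (Step2 (i :: ord))) gs R n Rd.
Proof.
move=> /alive_size lt_i vs_uniq npil [[nelig le_n n_gt0 budget] untouched].
have mv_lt p : p \in [seq (i, w) | w <- vs] -> p.1 < size gs by case/mapP=> w _ ->.
split => //; first by rewrite /running nelig orbT.
move=> run'; split; first split => //.
- exact: not_eligible_apply_moves.
- apply: within_budget_apply_moves budget => //; rewrite leq_add2r.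
  apply: weight_apply_moves => // x; rewrite count_map.
  exact: hv_add_nonpillars (not_eligible_neq_nil nelig) vs_uniq npil.
- move=> j; have [->|ji] := eqVneq j i; first by rewrite mem_head.
  by rewrite nth_apply_moves_other // => p /mapP[w _ ->]; rewrite eq_sym.
Qed.

Lemma inv_step c c' : step l c c' -> inv_config c -> inv_config c'.
Proof.
rewrite /inv_config; case=> {c c'}; cbn [ctl groups resid rounds Rdd].
- by [].
- by move=> gs R i v n Rd lt_i _ _; apply: inv_early_moves => // p; rewrite inE => /eqP ->.
- by [].
- by move=> gs R k n Rd [_ _ run]; apply.
- by move=> gs R i v mv k n Rd _ [].
- move=> gs R i v mv k n Rd nelig [mv_lt le_n _ inv_k]; split => // p p_mv.
  by rewrite size_move_gs ?mv_lt ?inE ?p_mv ?orbT // (mv_lt (i, v)) ?mem_head.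
- by move=> gs R n Rd; apply: inv_phase2_done.
- by move=> gs R v i n Rd _ _ lt_i _ _ _; apply: inv_early_moves => // p; rewrite inE => /eqP ->.
- by move=> gs R v i vs n Rd _ _ lt_i _ _ _ _ _; apply: inv_early_moves => // p /mapP[w _ ->].
- move=> gs R n Rd inv3; have lt_n := round_bound inv3; case: inv3 => nelig _ budget.
  by split => // v pil; left; rewrite mem_undup mem_filter pil pillar_mem.
- by move=> gs R P S i n Rd _ lt_i nGi _; apply: inv_sel_pick.
- by move=> gs R S mv n Rd; apply: inv_sel_move.
- move=> gs R ord n Rd _ mem_ord round; split => // j; rewrite mem_ord.
  have [al|/not_alive_thin ->] := boolP (alive l R (G gs j)); last by rewrite orbT.
  by rewrite andbT (alive_size al).
- move=> gs R i ord n Rd /not_alive_thin thin_i [round untouched]; split => // j.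
  have [->|ji] := eqVneq j i; first by rewrite thin_i orbT.
  by move: (untouched j); rewrite inE (negbTE ji).
- move=> gs R i v ord n Rd al _ _ npil.
  by apply: (@inv_step2_moves _ _ _ _ _ _ [:: v]) => // w; rewrite inE => /eqP ->.
- move=> gs R i vs ord n Rd al _ nconf vs_uniq mem_vs.
  apply: inv_step2_moves => // w; rewrite mem_vs => pil_i; apply: contra nconf => pil.
  by apply/hasP; exists w; rewrite ?pil_i ?pil ?pillar_mem.
- by move=> gs R n Rd [[nelig _ _ budget] untouched]; split.
Qed.

Lemma inv_rounds_bound c : inv_config c -> rounds c <= hmax (Rdd c).
Proof.
case: c => gs R [i|||P sel||ord|mv k|] n Rd; rewrite /inv_config /=.
- by case=> ->.
- by case=> ->.
- by move/round_bound/ltnW.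
- by case=> [[]].
- by case.
- by case=> [[]].
- by case.
- by [].
Qed.

End Invariant.

Theorem lemma9 (d l : nat) (T : seq (d.-tuple nat * nat)) (qs : seq (d.-tuple nat))
    (c : config) :
  0 < l -> T != [::] ->
  l_eligible l [seq t.2 | t <- T] ->
  uniq qs -> (forall q, (q \in qs) = (q \in [seq t.1 | t <- T])) ->
  reach l (init_config [seq qi_class T q | q <- qs]) c ->
  rounds c <= hmax (Rdd c).
Proof.
move=> l_gt0 nT _ _ mem_qs reach_c; apply: (inv_rounds_bound l_gt0).
elim: reach_c => [|c0 c' _ inv_c0 step_c0]; last exact: inv_step step_c0 inv_c0.
split => //; right; case: T nT mem_qs => [//|t T] _ mem_qs.
have t_qs : t.1 \in qs by rewrite mem_qs mem_head.
exists (index t.1 qs).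
by rewrite (nth_map t.1) ?index_mem // nth_index // /qi_class /= eqxx.
Qed.
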